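(* Let $d\ge1$ and $1<p_1<p<p_2<\infty$. Then there exist Young functions $\Phi$ and $\Psi$ with $q_\Phi<p_1$, $p_\Psi>p_2$, and $L^\Phi(\mathbb R^d)=L^\Psi(\mathbb R^d)=L^p(\mathbb R^d)$.
   Context: A Young function is a convex function $\Phi:[0,\infty)\to[0,\infty)$ with $\Phi(0)=0$, $\Phi(t)>0$ for $t>0$, and $\lim_{t\to\infty}\Phi(t)=\infty$. $\Phi'$ denotes the right derivative of $\Phi$. The Lebesgue exponents of $\Phi$ are $p_\Phi=\sup_{t>0}\frac{t\Phi'(t)}{\Phi(t)}$ and $q_\Phi=\inf_{t>0}\frac{t\Phi'(t)}{\Phi(t)}$. For a measurable $f$ on $\mathbb R^d$, $\rho_\Phi(f)=\int_{\mathbb R^d}\Phi(|f(x)|)\,dx$, the Luxemburg norm is $\|f\|_{L^\Phi}=\inf\{\lambda>0:\rho_\Phi(f/\lambda)\le1\}$, and the Orlicz space $L^\Phi(\mathbb R^d)$ consists of (classes of) measurable $f$ with $\|f\|_{L^\Phi}<\infty$. *)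

From HB Require Import structures.
From mathcomp Require Import all_boot all_order all_algebra.
From mathcomp Require Import all_classical all_reals all_analysis.
Set Implicit Arguments. Unset Strict Implicit. Unset Printing Implicit Defensive.
Import Order.TTheory GRing.Theory Num.Theory.
Import numFieldNormedType.Exports.
Local Open Scope classical_set_scope.
Local Open Scope ring_scope.

(* Young function Phi : [0,oo) -> [0,oo), given as a function R -> R
   whose values are only relevant on [0,oo). *)
Definition young_function (R : realType) (Phi : R -> R) : Prop :=
  [/\ (forall s t l : R, 0 <= s -> 0 <= t -> 0 <= l <= 1 ->
         Phi (l * s + (1 - l) * t) <= l * Phi s + (1 - l) * Phi t),
      Phi 0 = 0,
      (forall t : R, 0 < t -> 0 < Phi t) &
      Phi x @[x --> +oo] --> +oo].

Definition rderiv (R : realType) (Phi : R -> R) (t : R) : R :=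
  lim ((fun h : R => (Phi (t + h) - Phi t) / h) @ 0^'+).

Definition p_exp (R : realType) (Phi : R -> R) : \bar R :=
  ereal_sup [set ((t * rderiv Phi t / Phi t)%:E)%E | t in [set t : R | 0 < t]].
Definition q_exp (R : realType) (Phi : R -> R) : \bar R :=
  ereal_inf [set ((t * rderiv Phi t / Phi t)%:E)%E | t in [set t : R | 0 < t]].

Section spaces.
Context {dT : measure_display} {T : measurableType dT} {R : realType}.
Variable mu : {measure set T -> \bar R}.

Definition modular (Phi : R -> R) (f : T -> R) : \bar R :=
  (\int[mu]_x (Phi `|f x|)%:E)%E.

(* Luxemburg norm: inf {lambda > 0 | rho_Phi(f/lambda) <= 1} (inf of empty = +oo) *)
Definition luxemburg_norm (Phi : R -> R) (f : T -> R) : \bar R :=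
  ereal_inf [set (l%:E)%E | l in
    [set l : R | 0 < l /\ (modular Phi (fun x => (f x / l)%R) <= 1)%E]].

Definition orlicz_space (Phi : R -> R) : set (T -> R) :=
  [set f | measurable_fun setT f /\ (luxemburg_norm Phi f < +oo)%E].

Definition lebesgue_space (p : R) : set (T -> R) :=
  [set f | measurable_fun setT f /\ ('N[mu]_(p%:E)[EFin \o f] < +oo)%E].
End spaces.

(* mu is Lebesgue measure on R^d = d.-tuple R (with its Borel product
   sigma-algebra): it gives closed boxes their volume. *)
Definition is_lebesgue_Rd (R : realType) (d : nat)
    (mu : {measure set (d.-tuple R) -> \bar R}) : Prop :=
  forall a b : d.-tuple R, (forall i, tnth a i <= tnth b i) ->
    mu [set x | forall i, tnth a i <= tnth x i <= tnth b i] =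
    ((\prod_(i < d) (tnth b i - tnth a i))%:E)%E.

From HB Require Import structures.
From mathcomp Require Import all_boot all_order all_algebra.
From mathcomp Require Import all_classical all_reals all_analysis.
From mathcomp Require Import ring lra measurable_realfun.
Import Order.TTheory GRing.Theory Num.Theory.
Local Open Scope classical_set_scope.
Local Open Scope ring_scope.

(* Take Phi(t) = t^p + c (t - 1)_+ with c large.  Since t^p <= Phi(t) <= (1 + c) t^p,
   the modulars of Phi and of t^p are comparable, hence L^Phi = L^p for any
   measure.  The kink at t = 1 makes the ratio
   t Phi'(t) / Phi(t) equal to p + c > p2 there, while at a suitable T > 1 the
   ratio is close to T / (T - 1), which can be made smaller than p1. *)

Lemma powR_normr_div {R : realType} (p x l : R) : 0 < l ->
  `|x / l| `^ p = `|x| `^ p / l `^ p.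
Proof.
move=> l0; rewrite normrM normfV (gtr0_norm l0) powRM ?normr_ge0 ?invr_ge0 ?ltW //.
by rewrite -(powR_inv1 (ltW l0)) powRAC powR_inv1 ?powR_ge0.
Qed.

Lemma Lnorm_lty_integral {dT : measure_display} {T : measurableType dT}
    {R : realType} (mu : {measure set T -> \bar R}) (p : R) (f : T -> R) :
  p != 0 ->
  ('N[mu]_(p%:E)[EFin \o f] < +oo <-> \int[mu]_x (`|f x| `^ p)%:E < +oo)%E.
Proof.
move=> p0; have -> : ('N[mu]_(p%:E)[EFin \o f] =
    (\int[mu]_x (`|f x| `^ p)%:E) `^ p^-1)%E by rewrite unlock.
by split; [apply: lty_poweRy; rewrite invr_neq0 | exact: poweR_lty].
Qed.

Lemma luxemburg_norm_lty {dT : measure_display} {T : measurableType dT}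
    {R : realType} (mu : {measure set T -> \bar R}) (Phi : R -> R) f :
  (luxemburg_norm mu Phi f < +oo)%E <->
  exists2 l : R, 0 < l & (modular mu Phi (fun x => (f x / l)%R) <= 1)%E.
Proof.
split.
  by move=> /ereal_inf_ltP[_ [l [l0 Hl] <-] _]; exists l.
by move=> [l l0 Hl]; apply/ereal_inf_ltP; exists l%:E; [exists l | exact: ltry].
Qed.

Section orlicz_space_powR.
Context {dT : measure_display} {T : measurableType dT} {R : realType}.
Variable mu : {measure set T -> \bar R}.
Variables (Phi : R -> R) (p a b : R).
Hypothesis p0 : 0 < p.
Hypothesis a0 : 0 < a.
Hypothesis mPhi : measurable_fun setT Phi.
Hypothesis Phi_ge : forall t, 0 <= t -> a * t `^ p <= Phi t.
Hypothesis Phi_le : forall t, 0 <= t -> Phi t <= b * t `^ p.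

Let b0 : 0 < b.
Proof.
have := le_trans (Phi_ge 1 ler01) (Phi_le 1 ler01).
by rewrite powR1 !mulr1; exact: lt_le_trans.
Qed.

Let measurable_powR_normr (f : T -> R) : measurable_fun setT f ->
  measurable_fun setT (fun x => (`|f x| `^ p)%:E).
Proof.
move=> mf; apply/(measurable_EFinP setT (fun x => `|f x| `^ p)).
apply: (measurableT_comp (measurable_powR p)).
exact: measurableT_comp.
Qed.

Let measurable_Phi_normr_div (f : T -> R) (l : R) : measurable_fun setT f ->
  measurable_fun setT (fun x => (Phi `|f x / l|)%:E).
Proof.
move=> mf; apply/(measurable_EFinP setT (fun x => Phi `|f x / l|)).
apply: (measurableT_comp mPhi).
by apply: measurableT_comp => //; apply: measurable_funM.
Qed.

Lemma le_integral_powR_modular (f : T -> R) (l : R) :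
  measurable_fun setT f -> 0 < l ->
  ((a / l `^ p)%:E * \int[mu]_x (`|f x| `^ p)%:E <=
   modular mu Phi (fun x => (f x / l)%R))%E.
Proof.
move=> mf l0; rewrite -ge0_integralZl //; last 2 first.
- exact: measurable_powR_normr.
- by rewrite lee_fin divr_ge0 ?powR_ge0 ?ltW.
apply: ge0_le_integral => //.
- by move=> x _; rewrite -EFinM lee_fin !mulr_ge0 ?invr_ge0 ?powR_ge0 ?ltW.
- by apply: emeasurable_funM => //; exact: measurable_powR_normr.
- exact: measurable_Phi_normr_div.
move=> x _; rewrite -EFinM lee_fin mulrAC -mulrA -powR_normr_div //.
exact: Phi_ge.
Qed.

Lemma le_modular_integral_powR (f : T -> R) (l : R) :
  measurable_fun setT f -> 0 < l ->
  (modular mu Phi (fun x => (f x / l)%R) <=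
   (b / l `^ p)%:E * \int[mu]_x (`|f x| `^ p)%:E)%E.
Proof.
move=> mf l0; rewrite -ge0_integralZl //; last 2 first.
- exact: measurable_powR_normr.
- by rewrite lee_fin divr_ge0 ?powR_ge0 ?ltW.
apply: ge0_le_integral => //.
- move=> x _; rewrite lee_fin; apply: le_trans (Phi_ge _ (normr_ge0 _)).
  by rewrite mulr_ge0 ?powR_ge0 ?ltW.
- exact: measurable_Phi_normr_div.
- by apply: emeasurable_funM => //; exact: measurable_powR_normr.
move=> x _; rewrite -EFinM lee_fin mulrAC -mulrA -powR_normr_div //.
exact: Phi_le.
Qed.

Lemma orlicz_space_eq_lebesgue_space :
  orlicz_space mu Phi = lebesgue_space mu p.
Proof.
have p_neq0 : p != 0 by rewrite gt_eqF.
apply/seteqP; split => f [mf Hf]; split => //.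
- rewrite Lnorm_lty_integral //; move/luxemburg_norm_lty: Hf => [l l0 Hl].
  have := le_trans (le_integral_powR_modular _ _ mf l0) Hl.
  case: (\int[mu]_x _)%E => [r _| |//]; first exact: ltry.
  by rewrite mulry gtr0_sg ?divr_gt0 ?powR_gt0 // mul1e leye_eq.
- move: Hf; rewrite Lnorm_lty_integral //.
  have : (0 <= \int[mu]_x (`|f x| `^ p)%:E)%E.
    by apply: integral_ge0 => x _; rewrite lee_fin powR_ge0.
  case E : (\int[mu]_x _)%E => [r| |//]; rewrite ?ltry // lee_fin => r0 _.
  have br0 : 0 < b * r + 1 := ltr_wpDl (mulr_ge0 (ltW b0) r0) ltr01.
  set l := (b * r + 1) `^ p^-1.
  have l0 : 0 < l by rewrite powR_gt0.
  have lp : l `^ p = b * r + 1 by rewrite -powRrM mulVf // powRr1 ?ltW.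
  apply/luxemburg_norm_lty; exists l => //.
  apply: le_trans (le_modular_integral_powR _ _ mf l0) _.
  by rewrite E -EFinM lee_fin lp mulrAC ler_pdivrMr // mul1r lerDl.
Qed.
End orlicz_space_powR.

Lemma rderiv_is_derive {R : realType} (f g : R -> R) (t D : R) :
  (forall s, t <= s -> f s = g s) -> is_derive t 1 g D -> rderiv f t = D.
Proof.
move=> fg gD; rewrite /rderiv; apply: (cvg_lim (@norm_hausdorff _ R^o)).
have dg : derivable g t 1 by case: gD.
have := cvg_dnbhs_at_right dg; rewrite -/('D_1 g t) derive_val.
apply: cvg_trans; apply: near_eq_cvg; near=> h.
have h0 : 0 < h by near: h; exact: nbhs_right_gt.
rewrite /= !fg ?lexx ?lerDl ?ltW //.
have -> : h *: (1 : R) = h by rewrite /GRing.scale /= mulr1.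
by rewrite (addrC h) mulrC.
Unshelve. all: end_near. Qed.

Definition exponent_ratio {R : realType} (Phi : R -> R) (t : R) : R :=
  t * rderiv Phi t / Phi t.

Lemma q_exp_le {R : realType} (Phi : R -> R) (t : R) : 0 < t ->
  (q_exp Phi <= (exponent_ratio Phi t)%:E)%E.
Proof. by move=> t0; apply: ereal_inf_lbound; exists t. Qed.

Lemma p_exp_ge {R : realType} (Phi : R -> R) (t : R) : 0 < t ->
  ((exponent_ratio Phi t)%:E <= p_exp Phi)%E.
Proof. by move=> t0; apply: ereal_sup_ubound; exists t. Qed.

Lemma convex_maxr_subr1 {R : realType} (s t l : R) : 0 <= l <= 1 ->
  Num.max (l * s + (1 - l) * t - 1) 0 <=
  l * Num.max (s - 1) 0 + (1 - l) * Num.max (t - 1) 0.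
Proof.
move=> /andP[l0 l1]; have l1' : 0 <= 1 - l by rewrite subr_ge0.
rewrite ge_max; apply/andP; split; last first.
  by rewrite addr_ge0 // mulr_ge0 // le_max lexx orbT.
have -> : l * s + (1 - l) * t - 1 = l * (s - 1) + (1 - l) * (t - 1) by ring.
by rewrite lerD // ler_wpM2l // le_max lexx.
Qed.

Section kinked_powR.
Context {R : realType} (p c : R).

Definition kinked_powR (t : R) : R := t `^ p + c * Num.max (t - 1) 0.

Lemma measurable_kinked_powR : measurable_fun setT kinked_powR.
Proof.
apply: measurable_funD; first exact: measurable_powR.
apply: measurable_funM => //.
apply: (@measurable_maxr _ _ _ _ (fun t : R => t - 1) (cst 0)) => //.
exact: measurable_funB.
Qed.

Hypothesis p_ge1 : 1 <= p.
Hypothesis c_ge0 : 0 <= c.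

Let p_gt0 : 0 < p. Proof. exact: lt_le_trans ltr01 p_ge1. Qed.

Lemma kinked_powR_convex (s t l : R) : 0 <= s -> 0 <= t -> 0 <= l <= 1 ->
  kinked_powR (l * s + (1 - l) * t) <= l * kinked_powR s + (1 - l) * kinked_powR t.
Proof.
move=> s0 t0 l01; have /andP[l0 l1] := l01.
have powR_conv : (l * s + (1 - l) * t) `^ p <= l * s `^ p + (1 - l) * t `^ p.
  have := @convex_powR R p p_ge1 (Itv01 l0 l1) s t.
  by rewrite !inE /= !in_itv /= !andbT !convRE => /(_ s0 t0).
have -> : l * kinked_powR s + (1 - l) * kinked_powR t =
    (l * s `^ p + (1 - l) * t `^ p) +
    c * (l * Num.max (s - 1) 0 + (1 - l) * Num.max (t - 1) 0).
  by rewrite /kinked_powR; ring.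
by rewrite lerD // ler_wpM2l // convex_maxr_subr1.
Qed.

Lemma kinked_powR0 : kinked_powR 0 = 0.
Proof. by rewrite /kinked_powR powR0 ?gt_eqF // add0r max_r ?mulr0 // sub0r lerN10. Qed.

Lemma kinked_powR1 : kinked_powR 1 = 1.
Proof. by rewrite /kinked_powR powR1 subrr maxxx mulr0 addr0. Qed.

Lemma kinked_powR_ge (t : R) : 0 <= t -> t `^ p <= kinked_powR t.
Proof. by move=> t0; rewrite lerDl mulr_ge0 // le_max lexx orbT. Qed.

Lemma kinked_powR_le (t : R) : 0 <= t -> kinked_powR t <= (1 + c) * t `^ p.
Proof.
move=> t0; rewrite /kinked_powR mulrDl mul1r lerD2l ler_wpM2l //.
rewrite ge_max powR_ge0 andbT.
have [t1|t1] := leP 1 t; first by apply: le_trans (le1r_powR t1 p_ge1); rewrite gerBl.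
by apply: le_trans (powR_ge0 _ _); rewrite subr_le0 ltW.
Qed.

Lemma kinked_powR_gt0 (t : R) : 0 < t -> 0 < kinked_powR t.
Proof.
by move=> t0; apply: lt_le_trans (kinked_powR_ge _ (ltW t0)); rewrite powR_gt0.
Qed.

Lemma kinked_powR_cvgy : kinked_powR x @[x --> +oo] --> +oo.
Proof.
apply: (@ger_cvgy _ _ _ _ id); last exact: cvg_id.
near=> x; have x1 : 1 <= x by near: x; apply: nbhs_pinfty_ge; rewrite num_real.
by rewrite (le_trans (le1r_powR x1 p_ge1)) // kinked_powR_ge // (le_trans ler01).
Unshelve. all: end_near. Qed.

Lemma young_kinked_powR : young_function kinked_powR.
Proof.
split; [exact: kinked_powR_convex | exact: kinked_powR0 |
        exact: kinked_powR_gt0 | exact: kinked_powR_cvgy].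
Qed.

Lemma rderiv_kinked_powR (t : R) : 1 <= t ->
  rderiv kinked_powR t = p * t `^ (p - 1) + c.
Proof.
move=> t1; have t0 : 0 < t by apply: lt_le_trans t1.
apply: (@rderiv_is_derive _ _ (fun s => s `^ p + c * (s - 1))).
  by move=> s ts; rewrite /kinked_powR max_l // subr_ge0 (le_trans t1).
have ? := is_derive1_powR p t0.
by apply: is_derive_eq; rewrite subr0 [_ *: _]mulr1.
Qed.

Lemma exponent_ratio_kinked_powR1 : exponent_ratio kinked_powR 1 = p + c.
Proof.
by rewrite /exponent_ratio rderiv_kinked_powR // kinked_powR1 powR1 divr1 mul1r mulr1.
Qed.

(* The ratio at T tends to T/(T-1) as c grows; the choice T = 2q/(q-1) makes
   q(T-1) - T = q, so that c > p T^p already suffices. *)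
Lemma exponent_ratio_kinked_powR_lt (q T : R) : 1 < q -> T * (q - 1) = 2 * q ->
  p * T `^ p < c -> exponent_ratio kinked_powR T < q.
Proof.
move=> q1 hT pTc; rewrite /exponent_ratio.
have T1 : 1 <= T by nra.
have X0 : 0 < T `^ p by rewrite powR_gt0 ?(lt_le_trans ltr01).
rewrite rderiv_kinked_powR // mulrDr mulrCA mulr_powRB1 ?(le_trans ler01) //.
rewrite /kinked_powR max_l ?subr_ge0 // ltr_pdivrMr; last first.
  by rewrite ltr_wpDr // mulr_ge0 // subr_ge0.
have c0 : 0 < c by apply: lt_trans pTc; rewrite mulr_gt0.
have qX0 : 0 < q * T `^ p by rewrite mulr_gt0 // (lt_trans ltr01).
have cqc : c < q * c by rewrite ltr_pMl.
have cT : c * (T * (q - 1)) = c * (2 * q) by rewrite hT.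
lra.
Qed.

End kinked_powR.

Theorem mainTheorem6 (R : realType) (d : nat)
    (mu : {measure set (d.-tuple R) -> \bar R})
    (p1 p p2 : R) :
  (1 <= d)%N -> is_lebesgue_Rd mu ->
  1 < p1 -> p1 < p -> p < p2 ->
  exists Phi Psi : R -> R,
    [/\ young_function Phi, (q_exp Phi < p1%:E)%E &
         orlicz_space mu Phi = lebesgue_space mu p] /\
    [/\ young_function Psi, (p2%:E < p_exp Psi)%E &
         orlicz_space mu Psi = lebesgue_space mu p].
Proof.
move=> _ _ p1_gt1 p1p pp2.
have p_ge1 : 1 <= p by rewrite ltW // (lt_trans p1_gt1).
have p_gt0 : 0 < p by rewrite (lt_le_trans ltr01).
set T := 2 * p1 / (p1 - 1).
have hT : T * (p1 - 1) = 2 * p1 by rewrite divfK // subr_eq0 gt_eqF.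
have T_gt0 : 0 < T by rewrite /T divr_gt0 ?subr_gt0 // mulr_gt0 // (lt_trans ltr01).
set c := p * T `^ p + p2.
have pT_gt0 : 0 < p * T `^ p by rewrite mulr_gt0 ?powR_gt0.
have pTc : p * T `^ p < c by rewrite /c ltrDl (lt_trans p_gt0).
have p2c : p2 < c by rewrite /c ltrDr.
have c_ge0 : 0 <= c by rewrite ltW // (lt_trans pT_gt0).
have Lp : orlicz_space mu (kinked_powR p c) = lebesgue_space mu p.
  apply: (@orlicz_space_eq_lebesgue_space _ _ _ mu _ p 1 (1 + c) p_gt0 ltr01
    (measurable_kinked_powR p c)).
  - by move=> t t0; rewrite mul1r kinked_powR_ge.
  - exact: kinked_powR_le.
have young := @young_kinked_powR _ p c p_ge1 c_ge0.
exists (kinked_powR p c), (kinked_powR p c); split; split => //.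
- apply: le_lt_trans (q_exp_le _ _ T_gt0) _.
  by rewrite lte_fin; apply: exponent_ratio_kinked_powR_lt.
- apply: lt_le_trans (p_exp_ge _ _ ltr01).
  by rewrite lte_fin exponent_ratio_kinked_powR1 //; lra.
Qed.
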